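(* Let $C=w_1-\dots-w_m$ be a chain with positive weights. If there exists an admissible decomposition of $C$ into $k$ subchains with $k>2$, then there exists an admissible decomposition of $C$ into $k-1$ subchains.
   Context: A decomposition of $C=w_1-\dots-w_m$ into $p+1$ subchains is given by integers $0=i_0<i_1<\dots<i_p<i_{p+1}=m$, with $C_j=w_{i_{j-1}+1}-\dots-w_{i_j}$. Let $\tilde\Sigma_{\rm odd}(C_j)=\sum\{w_i : i_{j-1}<i\le i_j,\ i\text{ odd}\}$ and $\tilde\Sigma_{\rm even}(C_j)=\sum\{w_i : i_{j-1}<i\le i_j,\ i\text{ even}\}$ (parity with respect to the numbering in $C$), and for $1\le j\le p$ let $\Delta_j=\tilde\Sigma_{\rm even}(C_j)\tilde\Sigma_{\rm odd}(C_{j+1})-\tilde\Sigma_{\rm even}(C_{j+1})\tilde\Sigma_{\rm odd}(C_j)$. The decomposition is admissible if every $C_j$ has at least two edges and, for every $1\le j\le p$, $\Delta_j<0$ when $i_j$ is even and $\Delta_j>0$ when $i_j$ is odd. *)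

From HB Require Import structures.
From mathcomp Require Import all_boot all_order all_algebra.
Set Implicit Arguments. Unset Strict Implicit. Unset Printing Implicit Defensive.
Import Order.TTheory GRing.Theory Num.Theory.
Local Open Scope ring_scope.

(* A chain C = w_1 - ... - w_m is given by m and a weight function
   w : nat -> R, of which only w 1, ..., w m are relevant.
   A decomposition into p+1 subchains is given by the list of interior
   cut points  c = [:: i_1; ...; i_p]; the full list of boundaries is
   bounds m c = [:: i_0 = 0; i_1; ...; i_p; i_{p+1} = m]. *)

Definition bounds (m : nat) (c : seq nat) : seq nat := 0%N :: rcons c m.

Definition bnd (m : nat) (c : seq nat) (j : nat) : nat := nth 0%N (bounds m c) j.

Definition is_decomposition (m : nat) (c : seq nat) : bool :=
  sorted ltn (bounds m c).

Definition sigma_odd {R : realFieldType} (w : nat -> R) (a b : nat) : R :=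
  \sum_(a.+1 <= i < b.+1 | odd i) w i.
Definition sigma_even {R : realFieldType} (w : nat -> R) (a b : nat) : R :=
  \sum_(a.+1 <= i < b.+1 | ~~ odd i) w i.

(* Delta_j for 1 <= j <= p, with C_j = (i_{j-1}, i_j], C_{j+1} = (i_j, i_{j+1}] *)
Definition Delta {R : realFieldType} (m : nat) (w : nat -> R) (c : seq nat)
    (j : nat) : R :=
  let a := bnd m c j.-1 in let b := bnd m c j in let d := bnd m c j.+1 in
  sigma_even w a b * sigma_odd w b d - sigma_even w b d * sigma_odd w a b.

(* The subchain C_j = w_{i_{j-1}+1} - ... - w_{i_j} has i_j - i_{j-1} edges
   (the weights w_i label the edges of the chain). *)
Definition admissible {R : realFieldType} (m : nat) (w : nat -> R)
    (c : seq nat) : Prop :=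
  [/\ is_decomposition m c,
      (forall j, (1 <= j <= size c + 1)%N -> (bnd m c j.-1 + 2 <= bnd m c j)%N) &
      (forall j, (1 <= j <= size c)%N ->
         if odd (bnd m c j) then 0 < Delta m w c j else Delta m w c j < 0)].

Definition num_subchains (c : seq nat) : nat := (size c).+1.

From HB Require Import structures.
From mathcomp Require Import all_boot all_order all_algebra.
From mathcomp Require Import ring lra zify.
Import Order.TTheory GRing.Theory Num.Theory.
Set Implicit Arguments.
Unset Strict Implicit.
Local Open Scope ring_scope.

(* Write r_j = Σeven(C_j) / Σodd(C_j); since C_j has at least two edges,
   Σodd(C_j) > 0 and Δ_j = Σodd(C_j) Σodd(C_{j+1}) (r_j - r_{j+1}), so
   admissibility only says on which side of r_{j+1} the ratio r_j lies.
   Remove the cut i_j minimising |r_j - r_{j+1}|, merging C_j and C_{j+1}: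
   the merged ratio is the mediant of r_j and r_{j+1}, strictly between them,
   and each neighbouring ratio is at least |r_j - r_{j+1}| away from r_j
   (resp. r_{j+1}), hence stays on the same side of the mediant. *)

Lemma if_sign_neq0 (R : numDomainType) (b : bool) (x : R) :
  (if b then 0 < x else x < 0) -> x != 0.
Proof. by case: b => [/gt_eqF | /lt_eqF] ->. Qed.

Section Mediant.
Variable R : realFieldType.

Lemma closer_same_side (x y z : R) :
  `|z - y| < `|x - y| -> ((x < y) = (x < z)) * ((y < x) = (z < x)).
Proof.
have [xy|yx|->] := ltgtP x y; last by rewrite subrr normr0 normr_lt0.
- rewrite [`|x - y|]distrC [`|y - x|]gtr0_norm ?subr_gt0 // ltr_norml => /andP[? ?].
  by split; apply/esym/idP; lra.
- rewrite [`|x - y|]gtr0_norm ?subr_gt0 // ltr_norml => /andP[? ?].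
  by split; apply/esym/idP; lra.
Qed.

Lemma mediantBl (e1 o1 e2 o2 : R) : 0 < o1 -> 0 < o2 ->
  (e1 + e2) / (o1 + o2) - e1 / o1 = o2 / (o1 + o2) * (e2 / o2 - e1 / o1).
Proof. by move=> o1_gt0 o2_gt0; field; rewrite !gt_eqF ?addr_gt0. Qed.

Lemma mediant_closer (e1 o1 e2 o2 : R) :
  0 < o1 -> 0 < o2 -> e1 / o1 != e2 / o2 ->
  `|(e1 + e2) / (o1 + o2) - e1 / o1| < `|e1 / o1 - e2 / o2|.
Proof.
move=> o1_gt0 o2_gt0 neq; rewrite mediantBl // [X in _ < X]distrC normrM.
rewrite gtr0_norm ?divr_gt0 ?addr_gt0 // gtr_pMl ?normr_gt0 ?subr_eq0 1?eq_sym //.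
by rewrite ltr_pdivrMr ?addr_gt0 //; lra.
Qed.

End Mediant.

Lemma gaps_trans (f : nat -> nat) n :
  (forall j, (0 < j <= n)%N -> (f j.-1 + 2 <= f j)%N) ->
  forall a b, (a < b <= n)%N -> (f a + 2 <= f b)%N.
Proof.
move=> step a; elim=> [|b IH] // /andP[a_le_b b_lt_n].
have step_b : (f b + 2 <= f b.+1)%N by apply: step; lia.
have [a_lt_b | b_le_a] := ltnP a b.
  have : (f a + 2 <= f b)%N by apply: IH; lia.
  lia.
suff -> : a = b by [].
lia.
Qed.

(* Removing the cut i_j (1 <= j <= p) merges C_j and C_{j+1}; note that
   c = [:: i_1; ...; i_p] is indexed from 0. *)
Definition rem_cut (j : nat) (c : seq nat) : seq nat := take j.-1 c ++ drop j c.

Definition blocks_ge2 (m : nat) (c : seq nat) : Prop :=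
  forall j, (0 < j <= size c + 1)%N -> (bnd m c j.-1 + 2 <= bnd m c j)%N.

Section CutRemoval.
Variables (m : nat) (c : seq nat).

Lemma bnd_last : bnd m c (size c).+1 = m.
Proof. by rewrite /bnd /bounds /= nth_rcons ltnn eqxx. Qed.

Lemma size_rem_cut j : (0 < j <= size c)%N -> size (rem_cut j c) = (size c).-1.
Proof. by move=> j_range; rewrite size_cat size_takel ?size_drop; lia. Qed.

Lemma bnd_rem_cut j i : (0 < j <= size c)%N ->
  bnd m (rem_cut j c) i = bnd m c (if (i < j)%N then i else i.+1).
Proof.
case: j => // q /= q_lt; case: i => [|i] //=.
rewrite /bnd /bounds /= rcons_cat -drop_rcons // nth_cat size_take q_lt ltnS.
case: ltnP => i_q /=.
- by rewrite nth_take // nth_rcons ifT //; lia.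
- by rewrite nth_drop; congr nth; lia.
Qed.

End CutRemoval.

Lemma blocks_ge2_gap m c a b : blocks_ge2 m c -> (a < b <= (size c).+1)%N ->
  (bnd m c a + 2 <= bnd m c b)%N.
Proof.
by move=> blocks ab; apply: (@gaps_trans (bnd m c) (size c + 1) blocks); rewrite addn1.
Qed.

Lemma blocks_ge2_bnd_le m c a :
  blocks_ge2 m c -> (a <= (size c).+1)%N -> (bnd m c a <= m)%N.
Proof.
move=> blocks a_le; have [a_lt | a_ge] := ltnP a (size c).+1.
  have : (bnd m c a + 2 <= bnd m c (size c).+1)%N by apply: blocks_ge2_gap => //; lia.
  by rewrite bnd_last; lia.
suff -> : a = (size c).+1 by rewrite bnd_last.
lia.
Qed.

Lemma blocks_ge2_decomposition m c : blocks_ge2 m c -> is_decomposition m c.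
Proof.
move=> blocks; apply/(sortedP 0%N) => i; rewrite /= size_rcons => i_lt.
have : (bnd m c i + 2 <= bnd m c i.+1)%N by apply: blocks; lia.
by rewrite /bnd /=; lia.
Qed.

Lemma blocks_ge2_rem_cut m c j : (0 < j <= size c)%N ->
  blocks_ge2 m c -> blocks_ge2 m (rem_cut j c).
Proof.
move=> j_range blocks i; rewrite size_rem_cut // !bnd_rem_cut // => i_range.
by case: ltnP => i1_j; case: ltnP => i_j; apply: blocks_ge2_gap => //; lia.
Qed.

Lemma exists_minimizer (R : realDomainType) (f : nat -> R) n : (0 < n)%N ->
  exists2 j, (0 < j <= n)%N & forall i, (0 < i <= n)%N -> f j <= f i.
Proof.
move=> n_gt0; pose P := [pred i : 'I_n.+1 | 0 < i]%N.
have P_max : P ord_max by [].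
case: (arg_minP (fun i : 'I_n.+1 => f i) P_max) => j j_gt0 j_min.
have j_le : (j <= n)%N by rewrite -ltnS.
exists j; first by rewrite j_le andbT; exact: j_gt0.
by move=> i /andP[i_gt0 i_le]; apply: (j_min (Ordinal (i_le : (i < n.+1)%N))).
Qed.

Section Chain.
Variables (R : realFieldType) (m : nat) (w : nat -> R).
Hypothesis w_gt0 : forall i, (1 <= i <= m)%N -> 0 < w i.

Lemma sigma_oddD a b d : (a <= b <= d)%N ->
  sigma_odd w a d = sigma_odd w a b + sigma_odd w b d.
Proof. by move=> /andP[ab bd]; rewrite /sigma_odd (big_cat_nat _ (n := b.+1)). Qed.

Lemma sigma_evenD a b d : (a <= b <= d)%N ->
  sigma_even w a d = sigma_even w a b + sigma_even w b d.
Proof. by move=> /andP[ab bd]; rewrite /sigma_even (big_cat_nat _ (n := b.+1)). Qed.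

Lemma sigma_odd_ge0 a b : (b <= m)%N -> 0 <= sigma_odd w a b.
Proof.
move=> bm; rewrite /sigma_odd big_nat_cond.
by apply: sumr_ge0 => i /andP[/andP[ai ib] _]; apply/ltW/w_gt0; lia.
Qed.

Lemma sigma_odd_gt0 a b : (a + 2 <= b <= m)%N -> 0 < sigma_odd w a b.
Proof.
move=> /andP[ab bm]; have aab : (a <= a.+2 <= b)%N by lia.
rewrite (sigma_oddD aab).
have first_odd : 0 < sigma_odd w a a.+2.
  rewrite /sigma_odd big_ltn_cond // big_ltn_cond // big_geq //=.
  by case: (odd a); rewrite /= addr0; apply: w_gt0; lia.
by have := sigma_odd_ge0 a.+2 bm; lra.
Qed.

Definition ratio a b := sigma_even w a b / sigma_odd w a b.

Definition delta a b d :=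
  sigma_even w a b * sigma_odd w b d - sigma_even w b d * sigma_odd w a b.

Lemma sigma_odd_adj_gt0 a b d : (a + 2 <= b)%N -> (b + 2 <= d <= m)%N ->
  0 < sigma_odd w a b /\ 0 < sigma_odd w b d.
Proof. by move=> ab bdm; split; apply: sigma_odd_gt0; lia. Qed.

Lemma deltaE a b d : (a + 2 <= b)%N -> (b + 2 <= d <= m)%N ->
  delta a b d = sigma_odd w a b * sigma_odd w b d * (ratio a b - ratio b d).
Proof.
move=> ab bdm; have [so_ab so_bd] := sigma_odd_adj_gt0 ab bdm.
by rewrite /delta /ratio; field; rewrite !gt_eqF.
Qed.

Lemma delta_gt0 a b d : (a + 2 <= b)%N -> (b + 2 <= d <= m)%N ->
  (0 < delta a b d) = (ratio b d < ratio a b).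
Proof.
move=> ab bdm; have [so_ab so_bd] := sigma_odd_adj_gt0 ab bdm.
by rewrite deltaE // pmulr_rgt0 ?subr_gt0 ?mulr_gt0.
Qed.

Lemma delta_lt0 a b d : (a + 2 <= b)%N -> (b + 2 <= d <= m)%N ->
  (delta a b d < 0) = (ratio a b < ratio b d).
Proof.
move=> ab bdm; have [so_ab so_bd] := sigma_odd_adj_gt0 ab bdm.
by rewrite deltaE // pmulr_rlt0 ?subr_lt0 ?mulr_gt0.
Qed.

Lemma delta_eq0 a b d : (a + 2 <= b)%N -> (b + 2 <= d <= m)%N ->
  (delta a b d == 0) = (ratio a b == ratio b d).
Proof.
move=> ab bdm; have [so_ab so_bd] := sigma_odd_adj_gt0 ab bdm.
by rewrite deltaE // !mulf_eq0 subr_eq0 (gt_eqF so_ab) (gt_eqF so_bd).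
Qed.

Lemma cmp_ratio_merge_l a b d x : (a + 2 <= b)%N -> (b + 2 <= d <= m)%N ->
  ratio a b != ratio b d -> `|ratio a b - ratio b d| <= `|x - ratio a b| ->
  ((x < ratio a b) = (x < ratio a d)) * ((ratio a b < x) = (ratio a d < x)).
Proof.
move=> ab bdm neq far; have [so_ab so_bd] := sigma_odd_adj_gt0 ab bdm.
have abd : (a <= b <= d)%N by lia.
apply: closer_same_side; apply: lt_le_trans far.
by rewrite /ratio (sigma_oddD abd) (sigma_evenD abd); apply: mediant_closer.
Qed.

Lemma cmp_ratio_merge_r a b d x : (a + 2 <= b)%N -> (b + 2 <= d <= m)%N ->
  ratio a b != ratio b d -> `|ratio a b - ratio b d| <= `|x - ratio b d| ->
  ((x < ratio b d) = (x < ratio a d)) * ((ratio b d < x) = (ratio a d < x)).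
Proof.
move=> ab bdm neq far; have [so_ab so_bd] := sigma_odd_adj_gt0 ab bdm.
have abd : (a <= b <= d)%N by lia.
apply: closer_same_side; apply: lt_le_trans far.
rewrite /ratio (sigma_oddD abd) (sigma_evenD abd).
rewrite [sigma_even _ _ _ + _]addrC [sigma_odd _ _ _ + _]addrC [X in _ < X]distrC.
by apply: mediant_closer; rewrite // eq_sym.
Qed.

Lemma delta_merge_l a0 a b d :
  (a0 + 2 <= a)%N -> (a + 2 <= b)%N -> (b + 2 <= d <= m)%N ->
  delta a b d != 0 -> `|ratio a b - ratio b d| <= `|ratio a0 a - ratio a b| ->
  (if odd a then 0 < delta a0 a b else delta a0 a b < 0) ->
  (if odd a then 0 < delta a0 a d else delta a0 a d < 0).
Proof.
move=> a0a ab bdm; rewrite delta_eq0 // => neq far.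
have [cmp_lt cmp_gt] := cmp_ratio_merge_l ab bdm neq far.
have abm : (a + 2 <= b <= m)%N by lia.
have adm : (a + 2 <= d <= m)%N by lia.
by case: (odd a); [rewrite !delta_gt0 // cmp_gt | rewrite !delta_lt0 // cmp_lt].
Qed.

Lemma delta_merge_r a b c d :
  (a + 2 <= b)%N -> (b + 2 <= c)%N -> (c + 2 <= d <= m)%N ->
  delta a b c != 0 -> `|ratio a b - ratio b c| <= `|ratio b c - ratio c d| ->
  (if odd c then 0 < delta b c d else delta b c d < 0) ->
  (if odd c then 0 < delta a c d else delta a c d < 0).
Proof.
move=> ab bc cdm; have bcm : (b + 2 <= c <= m)%N by lia.
rewrite delta_eq0 // [`|ratio b c - _|]distrC => neq far.
have [cmp_lt cmp_gt] := cmp_ratio_merge_r ab bcm neq far.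
have ac : (a + 2 <= c)%N by lia.
by case: (odd c); [rewrite !delta_gt0 // cmp_lt | rewrite !delta_lt0 // cmp_gt].
Qed.

Definition gap c j :=
  `|ratio (bnd m c j.-1) (bnd m c j) - ratio (bnd m c j) (bnd m c j.+1)|.

Definition signs_ok c := forall j, (1 <= j <= size c)%N ->
  if odd (bnd m c j) then 0 < Delta m w c j else Delta m w c j < 0.

Section RemoveCut.
Variables (c : seq nat) (j : nat).
Hypothesis j_range : (0 < j <= size c)%N.
Local Notation B := (bnd m c).

Lemma Delta_rem_cut_lt i : (i.+1 < j)%N -> Delta m w (rem_cut j c) i = Delta m w c i.
Proof. by move=> i_lt; rewrite /Delta /= !bnd_rem_cut // !ifT //; lia. Qed.

Lemma Delta_rem_cut_gt i : (j < i)%N -> Delta m w (rem_cut j c) i = Delta m w c i.+1.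
Proof.
move=> j_lt; rewrite /Delta /= !bnd_rem_cut // !ifF //; try lia.
by rewrite prednK //; lia.
Qed.

Lemma Delta_rem_cut_l i : i.+1 = j ->
  Delta m w (rem_cut j c) i = delta (B i.-1) (B i) (B i.+2).
Proof.
move=> ij; have i1_lt : (i.-1 < i.+1)%N by lia.
by rewrite /Delta /= !bnd_rem_cut // -ij i1_lt ltnSn ltnn.
Qed.

Lemma Delta_rem_cut_r : Delta m w (rem_cut j c) j = delta (B j.-1) (B j.+1) (B j.+2).
Proof.
have j1_lt : (j.-1 < j)%N by lia.
by rewrite /Delta /= !bnd_rem_cut // j1_lt ltnn ltnNge leqnSn.
Qed.

Hypothesis blocks : blocks_ge2 m c.
Hypothesis signs : signs_ok c.
Hypothesis j_min : forall i, (0 < i <= size c)%N -> gap c j <= gap c i.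

Lemma signs_ok_rem_cut : signs_ok (rem_cut j c).
Proof.
move=> i; rewrite size_rem_cut // => i_range; rewrite bnd_rem_cut //.
have B_gap a b : (a < b <= (size c).+1)%N -> (B a + 2 <= B b)%N.
  exact: blocks_ge2_gap.
have B_gap_le a b : (a < b <= (size c).+1)%N -> (B a + 2 <= B b <= m)%N.
  by move=> ab; rewrite B_gap // blocks_ge2_bnd_le //; lia.
have [i1_lt_j | j_le_i1] := ltnP i.+1 j.
  by rewrite Delta_rem_cut_lt // (ltnW i1_lt_j); apply: signs; lia.
have [j_lt_i | i_le_j] := ltnP j i.
  by rewrite Delta_rem_cut_gt // ltnNge (ltnW j_lt_i) /=; apply: signs; lia.
have nz : delta (B j.-1) (B j) (B j.+1) != 0 := if_sign_neq0 (signs j_range).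
have [ij | ij] : i.+1 = j \/ i = j by lia.
- rewrite Delta_rem_cut_l // -ij ltnSn; rewrite -ij /= in nz.
  have far : gap c i.+1 <= gap c i by rewrite ij; apply: j_min; lia.
  apply: (delta_merge_l (B_gap i.-1 i _) (B_gap i i.+1 _) (B_gap_le i.+1 i.+2 _)
    nz far (signs _)); lia.
- rewrite ij Delta_rem_cut_r ltnn.
  have far : gap c j <= gap c j.+1 by apply: j_min; lia.
  apply: (delta_merge_r (B_gap j.-1 j _) (B_gap j j.+1 _) (B_gap_le j.+1 j.+2 _)
    nz far (signs _)); lia.
Qed.

End RemoveCut.

Lemma admissible_rem_cut c j : admissible m w c -> (0 < j <= size c)%N ->
  (forall i, (0 < i <= size c)%N -> gap c j <= gap c i) -> admissible m w (rem_cut j c).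
Proof.
move=> [_ blocks signs] j_range j_min.
have blocks' := blocks_ge2_rem_cut j_range blocks.
split=> //; first exact: blocks_ge2_decomposition.
exact: signs_ok_rem_cut.
Qed.

End Chain.

Unset Implicit Arguments.

Theorem mainTheorem8 (R : realFieldType) (m : nat) (w : nat -> R)
    (wpos : forall i : nat, (1 <= i <= m)%N -> 0 < w i) (k : nat) :
  (2 < k)%N ->
  (exists c : seq nat, num_subchains c = k /\ admissible m w c) ->
  exists c : seq nat, num_subchains c = k.-1 /\ admissible m w c.
Proof.
move=> k_gt2 [c [c_k adm_c]]; subst k.
have c_gt0 : (0 < size c)%N by rewrite /num_subchains in k_gt2; lia.
have [j j_range j_min] := exists_minimizer (gap m w c) c_gt0.
exists (rem_cut j c); split; last exact: admissible_rem_cut.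
by rewrite /num_subchains size_rem_cut // prednK.
Qed.
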